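(* Let $A$ and $B$ be rings, $f: A\to B$ a ring homomorphism and $J$ a proper ideal of $B$ such that the ideal $f^{-1}(J)$ of $A$ is semicommutative. If $f(A)+J$ is a weak Armendariz ring, then $A\bowtie^{f}J$ is a weak Armendariz ring.
   Context: All rings are associative with identity (not necessarily commutative), ring homomorphisms are unital, and ideals are two-sided. $\mathrm{nil}(R)$ denotes the set of nilpotent elements of a ring $R$. For a ring homomorphism $f:A\to B$ and an ideal $J$ of $B$, the amalgamation is the subring $A\bowtie^{f}J=\{(a,f(a)+j)\mid a\in A,\ j\in J\}$ of $A\times B$; $f(A)+J=\{f(a)+j: a\in A, j\in J\}$ is a subring of $B$. A ring $R$ (possibly without identity, e.g. an ideal regarded as a ring) is semicommutative if for all $a,b\in R$, $ab=0$ implies $aRb=0$. A ring $R$ is weak Armendariz if whenever $p(x)=\sum_{i=0}^n a_ix^i$ and $q(x)=\sum_{j=0}^m b_jx^j$ in $R[x]$ satisfy $p(x)q(x)=0$, then $a_ib_j\in\mathrm{nil}(R)$ for all $i,j$. *)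

From HB Require Import structures.
From mathcomp Require Import all_boot all_order all_algebra.
Set Implicit Arguments. Unset Strict Implicit. Unset Printing Implicit Defensive.
Import GRing.Theory.
Local Open Scope ring_scope.

Definition is_nilpotent (R : nzRingType) (x : R) : Prop := exists n : nat, x ^+ n = 0.

Definition is_ideal (R : nzRingType) (J : R -> Prop) : Prop :=
  [/\ J 0,
      (forall x y, J x -> J y -> J (x + y)),
      (forall x, J x -> J (- x)),
      (forall r x, J x -> J (r * x)) &
      (forall r x, J x -> J (x * r))].

Definition is_proper_ideal (R : nzRingType) (J : R -> Prop) : Prop :=
  is_ideal J /\ ~ J 1.

Definition semicommutative_on (R : nzRingType) (S : R -> Prop) : Prop :=
  forall a b, S a -> S b -> a * b = 0 -> forall r, S r -> a * r * b = 0.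

(* Weak Armendariz property of the subring S of R (S[x] viewed inside R[x]):
   if p, q have all coefficients in S and p q = 0 then every a_i b_j is
   nilpotent (nilpotency in S coincides with nilpotency in R). *)
Definition weak_armendariz_on (R : nzRingType) (S : R -> Prop) : Prop :=
  forall p q : {poly R},
    (forall i, S p`_i) -> (forall i, S q`_i) -> p * q = 0 ->
    forall i j, is_nilpotent (p`_i * q`_j).

Definition preimage (A B : nzRingType) (f : A -> B) (J : B -> Prop) : A -> Prop :=
  fun a => J (f a).

Definition image_plus (A B : nzRingType) (f : A -> B) (J : B -> Prop) : B -> Prop :=
  fun y => exists a j, J j /\ y = f a + j.

Definition amalgamation (A B : nzRingType) (f : A -> B) (J : B -> Prop)
  : (A * B)%type -> Prop :=
  fun x => exists a j, J j /\ x = (a, f a + j).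

From HB Require Import structures.
From mathcomp Require Import all_boot all_order all_algebra zify.
Local Open Scope ring_scope.
Import GRing.Theory.

(** The nilpotent elements of a semicommutative ideal K are closed under
    addition and under multiplication by K, which makes K itself weak
    Armendariz (induct on i + j, then on i).  For a zero product p q over the
    amalgamation, the B-components of p and q have coefficients in f(A) + J,
    so their coefficient products are nilpotent.  Projecting the A-components
    to f(A) + J shows that c := a_i b_j satisfies f(c^n) in J for some n; with
    u := c^n the polynomials u p_A and q_A u have coefficients in f^-1(J) and
    zero product, so (u a_i)(b_j u) = c^(2n+1) is nilpotent, hence so is c. *)

Lemma is_nilpotent_exp {R : nzRingType} (x : R) k :
  is_nilpotent (x ^+ k) -> is_nilpotent x.
Proof. by case=> n xkn; exists (k * n)%N; rewrite exprM. Qed.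

Lemma is_nilpotentC {R : nzRingType} (a b : R) :
  is_nilpotent (a * b) -> is_nilpotent (b * a).
Proof.
case=> n abn; exists n.+1.
have -> : (b * a) ^+ n.+1 = b * (a * b) ^+ n * a.
  by elim: n {abn} => [|n IH]; rewrite ?expr1 ?expr0 ?mulr1 // exprSr IH exprSr !mulrA.
by rewrite abn mulr0 mul0r.
Qed.

Lemma is_nilpotentN {R : nzRingType} (x : R) :
  is_nilpotent x -> is_nilpotent (- x).
Proof. by case=> n xn; exists n; rewrite exprNn xn mulr0. Qed.

Lemma is_nilpotent_pair {A B : nzRingType} (x : (A * B)%type) :
  is_nilpotent x.1 -> is_nilpotent x.2 -> is_nilpotent x.
Proof.
move=> [m x1m] [n x2n]; exists (m + n)%N.
have pow_pair k : x ^+ k = (x.1 ^+ k, x.2 ^+ k).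
  by case: x {x1m x2n} => a b; elim: k => [|k IH]; rewrite ?exprS ?IH.
by rewrite pow_pair exprD x1m mul0r exprD x2n mulr0.
Qed.

Lemma is_ideal_preimage {A B : nzRingType} (f : {rmorphism A -> B}) {J : B -> Prop} :
  is_ideal J -> is_ideal (preimage f J).
Proof.
case=> J0 JD JN JMl JMr; split; rewrite /preimage.
- by rewrite rmorph0.
- by move=> x y Jx Jy; rewrite rmorphD; apply: JD.
- by move=> x Jx; rewrite rmorphN; apply: JN.
- by move=> r x Jx; rewrite rmorphM; apply: JMl.
- by move=> r x Jx; rewrite rmorphM; apply: JMr.
Qed.

Section SemicommutativeIdeal.
Context {A : nzRingType} {K : A -> Prop}.
Hypotheses (idealK : is_ideal K) (scK : semicommutative_on K).

Let K0 : K 0. Proof. by case: idealK. Qed.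
Let KD x y : K x -> K y -> K (x + y). Proof. by case: idealK => _ KD _ _ _; apply: KD. Qed.
Let KMl r x : K x -> K (r * x). Proof. by case: idealK => _ _ _ KM _; apply: KM. Qed.
Let KMr r x : K x -> K (x * r). Proof. by case: idealK => _ _ _ _ KM; apply: KM. Qed.

Let K1 (u : A) := u = 1 \/ K u.

Let K1M u v : K1 u -> K1 v -> K1 (u * v).
Proof.
case=> [->|Ku]; first by rewrite mul1r.
by case=> [->|Kv]; right; [rewrite mulr1 | apply: KMr].
Qed.

Let K1_prod (I : Type) (w : seq I) (F : I -> A) :
  (forall i, K (F i)) -> K1 (\prod_(i <- w) F i).
Proof.
move=> KF; elim: w => [|i w IH]; first by rewrite big_nil; left.
by rewrite big_cons; apply: K1M => //; right.
Qed.

Let K1_exp x n : K x -> K1 (x ^+ n).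
Proof. by move=> Kx; rewrite -(subn0 n) -prodr_const_nat; apply: K1_prod. Qed.

Let semicommutative_K1 a b r : K1 a -> K1 b -> K r -> a * b = 0 -> a * r * b = 0.
Proof.
case=> [->|Ka]; first by rewrite mul1r => _ _ ->; rewrite mulr0.
case=> [->|Kb]; first by rewrite !mulr1 => _ ->; rewrite mul0r.
by move=> Kr ab0; apply: scK.
Qed.

(* Letters different from [F i0] are inserted one at a time into the vanishing
   power of [F i0], by semicommutativity. *)
Lemma word_prod_eq0 {I : eqType} (F : I -> A) i0 n :
  (forall i, K (F i)) -> F i0 ^+ n = 0 -> forall (w : seq I) j l,
  (n <= j + count_mem i0 w + l)%N ->
  F i0 ^+ j * \prod_(i <- w) F i * F i0 ^+ l = 0.
Proof.
move=> KF Fn; elim=> [|i w IH] j l /=.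
  by rewrite big_nil mulr1 -exprD addn0 => le_nj; rewrite -(subnK le_nj) exprD Fn mulr0.
rewrite big_cons; have [-> le_n|ne_i le_n] := eqVneq i i0.
  by rewrite mulrA -exprSr; apply: IH; lia.
rewrite mulrA -(mulrA _ _ (F i0 ^+ l)); apply: semicommutative_K1 => //.
- exact: K1_exp.
- by apply: K1M; [apply: K1_prod | apply: K1_exp].
- by rewrite mulrA; apply: IH; lia.
Qed.

Lemma is_nilpotentD x y :
  K x -> K y -> is_nilpotent x -> is_nilpotent y -> is_nilpotent (x + y).
Proof.
move=> Kx Ky [m xm] [n yn]; exists (m + n)%N.
pose F (b : bool) := if b then x else y.
have KF b : K (F b) by case: b.
have -> : x + y = \sum_(b : bool) F b by rewrite big_bool.
rewrite -[(m + n)%N in LHS]card_ord -prodr_const bigA_distr_bigA big1 // => g _.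
rewrite -(big_map g xpredT F).
set w := map g _.
have size_w : (count_mem true w + count_mem false w = size w)%N.
  by rewrite -(count_predC (pred1 true)); congr addn; apply: eq_count; case.
rewrite size_map /index_enum unlock -enumT size_enum_ord in size_w.
have [le_m|lt_m] := leqP m (count_mem true w).
  have := word_prod_eq0 F true m KF xm w 0 0.
  by rewrite expr0 mul1r mulr1; apply; lia.
have := word_prod_eq0 F false n KF yn w 0 0.
by rewrite expr0 mul1r mulr1; apply; lia.
Qed.

Lemma is_nilpotentMr x r : K x -> K r -> is_nilpotent x -> is_nilpotent (x * r).
Proof.
move=> Kx Kr [n xn]; exists n.
pose F (b : bool) := if b then x else r.
have KF b : K (F b) by case: b.
pose w k := flatten (nseq k [:: true; false]).
have word_w k : (x * r) ^+ k = \prod_(b <- w k) F b /\ count_mem true (w k) = k.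
  elim: k => [|k [IHp IHc]]; first by rewrite big_nil.
  have -> : w k.+1 = [:: true, false & w k] by [].
  by rewrite exprS IHp !big_cons mulrA /= IHc.
have [-> cnt] := word_w n.
have := word_prod_eq0 F true n KF xn (w n) 0 0.
by rewrite expr0 mul1r mulr1 cnt addn0; apply.
Qed.

Lemma is_nilpotentMl x r : K x -> K r -> is_nilpotent x -> is_nilpotent (r * x).
Proof. by move=> Kx Kr Nx; apply: is_nilpotentC; apply: is_nilpotentMr. Qed.

Let nilK_sum (I : finType) (P : pred I) (F : I -> A) :
  (forall i, P i -> K (F i) /\ is_nilpotent (F i)) ->
  K (\sum_(i | P i) F i) /\ is_nilpotent (\sum_(i | P i) F i).
Proof.
apply: (big_ind (fun z => K z /\ is_nilpotent z)) => [|u v [Ku Nu] [Kv Nv]].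
  by split; last by exists 1%N.
by split; [apply: KD | apply: is_nilpotentD].
Qed.

Lemma semicommutative_weak_armendariz : weak_armendariz_on K.
Proof.
move=> p q Kp Kq pq0.
suff nil_diag k t : (t <= k)%N -> is_nilpotent (p`_t * q`_(k - t)).
  by move=> i j; have := nil_diag (i + j)%N i (leq_addr _ _); rewrite addKn.
elim/ltn_ind: k t => k IHk; elim/ltn_ind=> t IHt le_tk.
have {pq0} sum0 : \sum_(i < k.+1) p`_i * q`_(k - i) * p`_t = 0.
  by rewrite -mulr_suml -coefM pq0 coef0 mul0r.
rewrite (bigD1 (Ordinal (le_tk : (t < k.+1)%N))) //= in sum0.
set s := \sum_(i < k.+1 | _) _ in sum0.
have [Ks Ns] : K s /\ is_nilpotent s.
  apply: nilK_sum => i ne_it; split; first by apply/KMr/KMr.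
  have le_ik : (i <= k)%N by rewrite -ltnS.
  have [lt_it|lt_ti|eq_it] := ltngtP i t.
  - by apply: is_nilpotentMr => //; [apply: KMr | apply: IHt].
  - have /IHk/(_ t (leq_addr _ _)) : (t + (k - i) < k)%N by lia.
    rewrite addKn -mulrA => /is_nilpotentC Nqp.
    by apply: is_nilpotentMl => //; apply: KMr.
  - by move: ne_it; rewrite -(inj_eq val_inj) /= eq_it eqxx.
have Npqp : is_nilpotent (p`_t * q`_(k - t) * p`_t).
  by move/eqP: sum0; rewrite addr_eq0 => /eqP ->; apply: is_nilpotentN.
apply: (@is_nilpotent_exp _ _ 2); rewrite expr2 mulrA.
by apply: is_nilpotentMr Npqp => //; apply/KMr/KMr.
Qed.

(* With u := (a_i b_j)^n in K, the zero product (u p)(q u) has coefficients in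
   K, and its (i, j) coefficient product is (a_i b_j)^(2n+1). *)
Lemma coef_mul0_nilpotent (p q : {poly A}) i j n :
  p * q = 0 -> K ((p`_i * q`_j) ^+ n) -> is_nilpotent (p`_i * q`_j).
Proof.
move=> pq0 Ku; set u := _ ^+ n in Ku.
have : is_nilpotent ((u%:P * p)`_i * (q * u%:P)`_j).
  apply: semicommutative_weak_armendariz.
  - by move=> l; rewrite coefCM; apply: KMr.
  - by move=> l; rewrite coefMC; apply: KMl.
  - by rewrite mulrA -(mulrA _ p) pq0 mulr0 mul0r.
rewrite coefCM coefMC => Nuc; apply: (@is_nilpotent_exp _ _ (n + 1 + n)).
by rewrite !exprD expr1 -/u !mulrA in Nuc *.
Qed.

End SemicommutativeIdeal.

Lemma weak_armendariz_rmorph {R S : nzRingType} (g : {rmorphism R -> S})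
    {T : S -> Prop} {p q : {poly R}} :
  weak_armendariz_on T -> (forall l, T (g p`_l)) -> (forall l, T (g q`_l)) ->
  p * q = 0 -> forall i j, is_nilpotent (g (p`_i * q`_j)).
Proof.
move=> waT Tp Tq pq0 i j.
have pq0g : map_poly g p * map_poly g q = 0 by rewrite -rmorphM pq0 rmorph0.
rewrite rmorphM -!(coef_map g).
by apply: (waT _ _ _ _ pq0g) => l; rewrite coef_map; [apply: Tp | apply: Tq].
Qed.

Theorem theorem4p1 (A B : nzRingType) (f : {rmorphism A -> B}) (J : B -> Prop) :
  is_proper_ideal J ->
  semicommutative_on (preimage f J) ->
  weak_armendariz_on (image_plus f J) ->
  weak_armendariz_on (amalgamation f J).
Proof.
move=> [idealJ _] scK waJ p q Hp Hq pq0 i j.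
have J0 : J 0 by case: idealJ.
apply: is_nilpotent_pair.
  have [n fcn] : is_nilpotent ((f \o fst) (p`_i * q`_j)).
    apply: (weak_armendariz_rmorph (f \o fst) waJ _ _ pq0) => l;
      [exists (p`_l).1, 0 | exists (q`_l).1, 0]; by rewrite addr0.
  have pq0A : map_poly fst p * map_poly fst q = 0 by rewrite -rmorphM pq0 rmorph0.
  have := coef_mul0_nilpotent (is_ideal_preimage f idealJ) scK _ _ i j n pq0A.
  by rewrite !coef_map; apply; move: fcn; rewrite /preimage /= !rmorphXn !rmorphM => ->.
apply: (weak_armendariz_rmorph snd waJ _ _ pq0) => l /=.
  by case: (Hp l) => a [b [Jb ->]]; exists a, b.
by case: (Hq l) => a [b [Jb ->]]; exists a, b.
Qed.
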